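(* Consider the Probabilistic Serial mechanism with $n$ agents and $m \le n$ items in the following dichotomous setting for agent 1. Agent 1 has a true strict linear order $\succ_1$ over the items; let $\overline{O}$ be the set of its $k$ most preferred items under $\succ_1$ (for some $1 \le k \le m$), and let agent 1's utility from an allocation be the total amount it receives of items in $\overline{O}$. Fix arbitrary reported strict linear orders of agents $2,\dots,n$. Let $u_1$ be agent 1's utility when it reports $\succ_1$, and let $T$ be the time at which the last item of $\overline{O}$ is exhausted in this truthful run. If $\tfrac23 \le T \le 1$, then for every strict linear order $\succ'_1$ reported by agent 1, its resulting utility $u'_1$ satisfies $u'_1 \le \tfrac32 u_1$.
   Context: Probabilistic Serial: there are $n$ agents and $m$ divisible items of unit supply; each agent reports a strict linear order over all items. Starting at time $0$, every agent consumes at rate $1$ per unit time its most preferred item (according to its report) among those with positive remaining supply; when an item is exhausted, agents consuming it move to their most preferred item still available; this continues until all items are exhausted. Each agent's allocation is the amount of each item it consumed. (In the truthful run agent 1 eats only items of $\overline{O}$ until time $T$, so $u_1 = T$.) *)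

From HB Require Import structures.
From mathcomp Require Import all_boot all_order all_algebra all_fingroup.
Set Implicit Arguments. Unset Strict Implicit. Unset Printing Implicit Defensive.
Import Order.TTheory GRing.Theory Num.Theory.
Local Open Scope ring_scope.

(* A strict linear order over the items 'I_m is encoded as a permutation
   [r : {perm 'I_m}] giving the RANK of each item: [r j] is the position of
   item j in the order, rank 0 = most preferred.  So j is preferred to j'
   iff  r j < r j'. *)

Section PS.
Variables (R : realFieldType) (n m : nat).

Definition top (r : {perm 'I_m}) (A : {set 'I_m}) : option 'I_m :=
  [pick j in A | [forall j' in A, (r j <= r j')%N]].

Record ps_state := PSState {
  supply : 'I_m -> R;
  alloc  : 'I_n -> 'I_m -> R;
  clock  : R;
  extime : 'I_m -> R
}.

Definition ps_init : ps_state :=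
  PSState (fun _ => 1) (fun _ _ => 0) 0 (fun _ => 0).

(* One phase of the eating algorithm: every agent eats its most preferred
   item with positive remaining supply, at rate 1, until the first moment
   some item gets exhausted. *)
Definition ps_step (prof : 'I_n -> {perm 'I_m}) (s : ps_state) : ps_state :=
  let A := [set j | 0 < supply s j] in
  let eat i := top (prof i) A in
  let cnt j := #|[set i | eat i == Some j]| in
  (* duration of the phase: earliest exhaustion time among eaten items.
     The default value 1 never matters: supplies stay <= 1, so every term
     supply/cnt is <= 1. *)
  let d := \big[Num.min/1]_(j in A | (0 < cnt j)%N) (supply s j / (cnt j)%:R) in
  let sup' j := supply s j - (cnt j)%:R * d in
  if A == set0 then s else
  PSState sup'
    (fun i j => alloc s i j + (if eat i == Some j then d else 0))
    (clock s + d)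
    (fun j => if (j \in A) && ~~ (0 < sup' j) then clock s + d else extime s j).

(* Each phase with remaining items exhausts at least one item, so after m
   phases all items are exhausted and the algorithm has terminated. *)
Definition ps_run (prof : 'I_n -> {perm 'I_m}) : ps_state :=
  iter m (ps_step prof) ps_init.

Definition PS (prof : 'I_n -> {perm 'I_m}) : 'I_n -> 'I_m -> R :=
  alloc (ps_run prof).

Definition exhaust_time (prof : 'I_n -> {perm 'I_m}) (j : 'I_m) : R :=
  extime (ps_run prof) j.

End PS.

Definition top_k (m k : nat) (r : {perm 'I_m}) : {set 'I_m} :=
  [set j | (r j < k)%N].

Definition dich_util (R : realFieldType) (n m : nat)
  (O : {set 'I_m}) (P : 'I_n -> 'I_m -> R) (a : 'I_n) : R :=
  \sum_(j in O) P a j.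

Definition deviate (n m : nat) (prof : 'I_n -> {perm 'I_m}) (a : 'I_n)
  (r : {perm 'I_m}) : 'I_n -> {perm 'I_m} :=
  fun i => if i == a then r else prof i.

From HB Require Import structures.
From mathcomp Require Import all_boot all_order all_algebra all_fingroup.
From mathcomp Require Import lra.
Import Order.TTheory GRing.Theory Num.Theory.
Local Open Scope ring_scope.
Set Implicit Arguments. Unset Strict Implicit.

(* In the truthful run agent a eats from O as long as some item of O is left,
   so its O-utility keeps pace with the clock until the last item of O is
   exhausted: u1 >= T >= 2/3.  Whatever a reports, it eats at rate 1 and the
   n >= m agents finish the m units of supply by time 1, so the deviating
   utility is at most 1 <= 3/2 * u1. *)

Section Top.
Variables (m : nat) (r : {perm 'I_m}) (A : {set 'I_m}).

Lemma top_min j : top r A = Some j -> j \in A /\ forall j', j' \in A -> (r j <= r j')%N.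
Proof.
rewrite /top; case: pickP => [j1 /andP[Aj1 /forall_inP j1_min] [<-]|//].
by split.
Qed.

Lemma top_some : A != set0 -> exists j, top r A = Some j.
Proof.
case/set0Pn => j0 Aj0; rewrite /top; case: pickP => [j _|no_top]; first by exists j.
case: (arg_minnP (fun j => r j) Aj0) => j Aj j_min.
have := no_top j => /=; rewrite (Aj : j \in A) /= => /negbT/negP[].
exact/forall_inP.
Qed.

End Top.

Section Eating.
Variables (R : realFieldType) (n m : nat) (prof : 'I_n -> {perm 'I_m}).
Implicit Type s : ps_state R n m.

Definition avail s : {set 'I_m} := [set j | 0 < supply s j].
Definition eats s i j : bool := top (prof i) (avail s) == Some j.
Definition eaters s j : nat := #|[set i | eats s i j]|.
Definition phase_len s : R :=
  \big[Num.min/1]_(j in avail s | (0 < eaters s j)%N) (supply s j / (eaters s j)%:R).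

Lemma ps_step_idle s : avail s = set0 -> ps_step prof s = s.
Proof. by rewrite /ps_step /avail => ->; rewrite eqxx. Qed.

Lemma ps_step_active s : avail s != set0 ->
  ps_step prof s =
  PSState (fun j => supply s j - (eaters s j)%:R * phase_len s)
    (fun i j => alloc s i j + (if eats s i j then phase_len s else 0))
    (clock s + phase_len s)
    (fun j => if (j \in avail s) && ~~ (0 < supply s j - (eaters s j)%:R * phase_len s)
              then clock s + phase_len s else extime s j).
Proof. by rewrite /ps_step => /negbTE ->. Qed.

Lemma phase_len_ge0 s : (forall j, 0 <= supply s j) -> 0 <= phase_len s.
Proof. by move=> supply_ge0; apply: le_bigmin => // j _; rewrite divr_ge0. Qed.

Lemma eaters_phase_len_le s j : (forall j, 0 <= supply s j) ->
  (eaters s j)%:R * phase_len s <= supply s j.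
Proof.
move=> supply_ge0; have [->|eaten] := posnP (eaters s j); first by rewrite mul0r.
have avail_j : j \in avail s.
  by case/card_gt0P: eaten => i; rewrite inE => /eqP/top_min[].
rewrite mulrC -ler_pdivlMr ?ltr0n //.
by apply: bigmin_le_cond; rewrite avail_j eaten.
Qed.

Lemma sum_eats_agent s i (d : R) : avail s != set0 ->
  \sum_j (if eats s i j then d else 0) = d.
Proof.
case/(top_some (prof i)) => j0 top_j0.
rewrite (bigD1 j0) //= /eats top_j0 eqxx big1 ?addr0 // => j /negbTE.
by rewrite eq_sym => ne_j; rewrite (inj_eq Some_inj) ne_j.
Qed.

Lemma sum_eats_item s j (d : R) :
  \sum_i (if eats s i j then d else 0) = (eaters s j)%:R * d.
Proof. by rewrite -big_mkcond sumr_const mulr_natl /eaters cardsE. Qed.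

Definition ps_wf s :=
  [/\ forall j, 0 <= supply s j, forall i j, 0 <= alloc s i j,
      forall i, \sum_j alloc s i j = clock s &
      forall j, \sum_i alloc s i j + supply s j = 1].

Lemma ps_wf_init : ps_wf (ps_init R n m).
Proof. by split=> //= *; rewrite big1 ?add0r. Qed.

Lemma ps_wf_step s : ps_wf s -> ps_wf (ps_step prof s).
Proof.
case=> supply_ge0 alloc_ge0 alloc_row alloc_col.
have [/ps_step_idle ->|active] := eqVneq (avail s) set0; first by split.
have d_ge0 := phase_len_ge0 supply_ge0.
rewrite ps_step_active //; split=> /= [j|i j|i|j].
- by rewrite subr_ge0 eaters_phase_len_le.
- by rewrite addr_ge0 //; case: ifP.
- by rewrite big_split /= alloc_row sum_eats_agent.
- by rewrite big_split /= sum_eats_item addrACA subrr addr0 alloc_col.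
Qed.

Lemma ps_wf_iter t : ps_wf (iter t (ps_step prof) (ps_init R n m)).
Proof. by elim: t => [|t IH]; [exact: ps_wf_init | exact: ps_wf_step]. Qed.

Lemma avail_step_sub s : ps_wf s -> avail (ps_step prof s) \subset avail s.
Proof.
case=> supply_ge0 _ _ _.
have [/ps_step_idle ->//|active] := eqVneq (avail s) set0.
apply/subsetP => j; rewrite ps_step_active // !inE /= => /lt_le_trans; apply.
by rewrite gerDl oppr_le0 mulr_ge0 ?phase_len_ge0.
Qed.

(* n agents eat at unit rate, but there are only m units of supply. *)
Lemma clock_mul_le s : ps_wf s -> n%:R * clock s <= m%:R.
Proof.
case=> supply_ge0 _ alloc_row alloc_col.
have -> : n%:R * clock s = \sum_(i < n) clock s by rewrite sumr_const card_ord mulr_natl.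
have -> : m%:R = \sum_(j < m) (1 : R) by rewrite sumr_const card_ord.
rewrite (eq_bigr _ (fun i _ => esym (alloc_row i))) exchange_big /=.
by apply: ler_sum => j _; rewrite -(alloc_col j) lerDl.
Qed.

Lemma sum_alloc_le_clock s (O : {set 'I_m}) i : ps_wf s ->
  \sum_(j in O) alloc s i j <= clock s.
Proof.
case=> _ alloc_ge0 alloc_row _; rewrite -(alloc_row i) [leRHS](bigID (mem O)) /=.
by rewrite lerDl sumr_ge0.
Qed.

Lemma extime_step s j :
  extime (ps_step prof s) j =
  if (j \in avail s) && (j \notin avail (ps_step prof s))
  then clock (ps_step prof s) else extime s j.
Proof.
have [idle|active] := eqVneq (avail s) set0.
  by rewrite ps_step_idle // idle in_set0.
by rewrite ps_step_active //= /avail !inE.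
Qed.

End Eating.

Lemma dich_util_le1 (R : realFieldType) (n m : nat) (prof : 'I_n -> {perm 'I_m})
  (O : {set 'I_m}) (a : 'I_n) :
  (m <= n)%N -> dich_util O (PS R prof) a <= 1.
Proof.
move=> le_mn; have wf := ps_wf_iter R prof m.
apply: le_trans (sum_alloc_le_clock O a wf) _.
have n_gt0 : (0 < n)%N by apply: leq_ltn_trans (ltn_ord a).
rewrite -(@ler_pM2l _ n%:R) ?ltr0n // mulr1 (le_trans (clock_mul_le wf)) //.
by rewrite ler_nat.
Qed.

Section Truthful.
Variables (R : realFieldType) (n m k : nat) (a : 'I_n) (prof : 'I_n -> {perm 'I_m}).
Implicit Type s : ps_state R n m.

Let O := top_k k (prof a).
Let util s := \sum_(j in O) alloc s a j.

(* O is an upper set of a's order. *)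
Definition truthful_inv s :=
  (forall j, j \in O -> extime s j <= util s) /\
  (O :&: avail s != set0 -> util s = clock s).

Lemma eats_top_k s j : O :&: avail s != set0 -> eats prof s a j -> j \in O.
Proof.
case/set0Pn => j' /setIP[]; rewrite /O inE => j'_top avail_j' /eqP /top_min[_ j_min].
by rewrite inE (leq_ltn_trans (j_min j' avail_j') j'_top).
Qed.

Lemma util_step s : avail s != set0 ->
  util (ps_step prof s) =
  util s + (if O :&: avail s != set0 then phase_len prof s else 0).
Proof.
move=> active; rewrite /util ps_step_active //= big_split /=.
congr (_ + _); case: ifPn => [O_avail|].
  case: (top_some (prof a) active) => j0 top_j0.
  have eats_j0 : eats prof s a j0 by rewrite /eats top_j0.
  rewrite (bigD1 j0) ?(eats_top_k O_avail) //= eats_j0 big1 ?addr0 // => j /andP[_].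
  by rewrite /eats top_j0 (inj_eq Some_inj) eq_sym => /negbTE ->.
rewrite negbK => /eqP no_O; rewrite big1 // => j O_j; case: ifPn => // /eqP/top_min[avail_j _].
by have := in_set0 j; rewrite -no_O in_setI O_j avail_j.
Qed.

Lemma util_step_ge s : ps_wf s -> util s <= util (ps_step prof s).
Proof.
case=> supply_ge0 _ _ _.
have [/ps_step_idle ->//|active] := eqVneq (avail s) set0.
by rewrite util_step // lerDl; case: ifP => // _; exact: phase_len_ge0.
Qed.

Lemma truthful_inv_step s : ps_wf s -> truthful_inv s -> truthful_inv (ps_step prof s).
Proof.
move=> wf [extime_le_util util_clock].
have [/ps_step_idle ->//|active] := eqVneq (avail s) set0.
have util_clock' : O :&: avail s != set0 -> util (ps_step prof s) = clock (ps_step prof s).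
  by move=> O_avail; rewrite util_step // O_avail util_clock // ps_step_active.
split=> [j O_j|O_avail'].
  rewrite extime_step; case: ifPn => [/andP[avail_j _]|_].
    by rewrite util_clock' //; apply/set0Pn; exists j; rewrite in_setI O_j.
  exact: le_trans (extime_le_util j O_j) (util_step_ge wf).
apply: util_clock'; apply: contraNneq O_avail' => no_O.
by rewrite -subset0 -no_O setIS // avail_step_sub.
Qed.

Lemma truthful_inv_iter t : truthful_inv (iter t (ps_step prof) (ps_init R n m)).
Proof.
elim: t => [|t IH]; first by split=> [j _|_]; rewrite /util big1.
exact: truthful_inv_step (ps_wf_iter R prof t) IH.
Qed.

Lemma exhaust_time_le_util j :
  j \in O -> exhaust_time R prof j <= dich_util O (PS R prof) a.
Proof. by case: (truthful_inv_iter m) => extime_le_util _; exact: extime_le_util. Qed.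

End Truthful.

Theorem theorem3 (R : realFieldType) (n m k : nat) (a : 'I_n)
  (prof : 'I_n -> {perm 'I_m}) :
  (m <= n)%N -> (1 <= k)%N -> (k <= m)%N ->
  let O := top_k k (prof a) in
  let u1 := dich_util O (PS R prof) a in
  let T := \big[Num.max/0]_(j in O) exhaust_time R prof j in
  2 / 3 <= T -> T <= 1 ->
  forall r' : {perm 'I_m},
    dich_util O (PS R (deviate prof a r')) a <= 3 / 2 * u1.
Proof.
move=> le_mn _ _ O u1 T two_thirds_le_T _ r'.
have [_ alloc_ge0 _ _] := ps_wf_iter R prof m.
have T_le_u1 : T <= u1.
  apply: bigmax_le => [|j O_j]; last exact: exhaust_time_le_util.
  by apply: sumr_ge0 => j _; apply: alloc_ge0.
have := dich_util_le1 R (deviate prof a r') O a le_mn.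
lra.
Qed.
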